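(* Let $E_0>0$ and let $\phi$ satisfy the standing assumptions below with $n\le3$. Then there exists $\delta>0$ such that for all $V\in(E_0-\delta,E_0)$, $\left|\frac{\xi_{1/2}(V)}{\xi_{-1/2}(V)}\cdot\frac{\zeta(V)}{\xi_{-1/2}(V)}\right|<\frac45$.
   Context: Standing assumptions on $\phi:(-\infty,1]\to\mathbb R_+$: $\phi(x)=0$ for $x<0$, $\phi$ analytic on $[0,1]$, and there is $n\in\{0,1,2,\dots\}$ with $\phi'(0)=\dots=\phi^{(n-1)}(0)=0$, $\phi^{(n)}(0)>0$. Put $\Phi(E)=\phi(1-E/E_0)$. For $\kappa\in\{\frac32,\frac12,-\frac12\}$ and $V\in(0,E_0]$: $\xi_\kappa(V)=\frac{4\pi}{V}\int_V^{E_0}\Phi(E)\left(\frac{E^2}{V^2}-1\right)^\kappa dE$. For $V\in(0,E_0)$: $\zeta(V)=-4\pi\frac{d}{dV}\left(\int_V^{E_0}\Phi(E)\left(\frac{E^2}{V^2}-1\right)^{-1/2}dE\right)$, so that $\xi_{-1/2}'(V)=-\frac1V(\xi_{-1/2}(V)+\zeta(V))$. *)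

From Stdlib Require Import Reals Lra ClassicalEpsilon.
Open Scope R_scope.

Definition analytic_on01 (phi : R -> R) : Prop :=
  forall x0, 0 <= x0 <= 1 ->
    exists (a : nat -> R) (r : R), 0 < r /\
      forall x, 0 <= x <= 1 -> Rabs (x - x0) < r -> Pser a (x - x0) (phi x).

(* Since phi is analytic at 0 (from
   the right), phi^(k)(0) = k! * a k where a is its Taylor series at 0; hence
   phi'(0)=...=phi^(n-1)(0)=0 and phi^(n)(0)>0 iff a k = 0 (k<n) and a n > 0. *)
Definition standing_assumptions (phi : R -> R) (n : nat) : Prop :=
  (forall x, x <= 1 -> 0 <= phi x) /\
  (forall x, x < 0 -> phi x = 0) /\
  analytic_on01 phi /\
  (exists (a : nat -> R) (r : R), 0 < r /\
     (forall x, 0 <= x < r -> x <= 1 -> Pser a x (phi x)) /\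
     (forall k, (k < n)%nat -> a k = 0) /\ 0 < a n).

Definition Phi (phi : R -> R) (E0 E : R) : R := phi (1 - E / E0).

Definition has_integral (f : R -> R) (a b I : R) : Prop :=
  exists pr : Riemann_integrable f a b, RiemannInt pr = I.

Definition has_impint (f : R -> R) (a b I : R) : Prop :=
  forall eps, 0 < eps -> exists del, 0 < del /\
    forall c, a < c < a + del -> c <= b ->
      exists J, has_integral f c b J /\ Rabs (J - I) < eps.

(* Value of the improper integral (0 if it does not exist). *)
Definition impint (f : R -> R) (a b : R) : R :=
  match excluded_middle_informative (exists I, has_impint f a b I) with
  | left H => proj1_sig (constructive_indefinite_description _ H)
  | right _ => 0
  end.

(* Derivative value (0 if not differentiable). *)
Definition deriv (f : R -> R) (x : R) : R :=
  match excluded_middle_informative (exists l, derivable_pt_lim f x l) with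
  | left H => proj1_sig (constructive_indefinite_description _ H)
  | right _ => 0
  end.

Definition xi (phi : R -> R) (E0 kappa V : R) : R :=
  4 * PI / V *
  impint (fun E => Phi phi E0 E * Rpower (E ^ 2 / V ^ 2 - 1) kappa) V E0.

Definition zeta (phi : R -> R) (E0 V : R) : R :=
  - 4 * PI *
  deriv (fun W => impint (fun E => Phi phi E0 E * Rpower (E ^ 2 / W ^ 2 - 1) (-1/2)) W E0) V.

(* Near E0 write phi(1 - E/E0) = u^n q(u) with u = 1 - E/E0 and q(0) > 0, and take V so close
   to E0 that q(u) stays within a factor 1 +- 1/1000 of q(0) and u q'(u) is negligible. The
   substitution E = W + (E0 - W) s^2 turns the singular integrals into proper ones over [0,1].
   With L = E0 - V, J_n = int_0^1 (1-s^2)^n and K_n = int_0^1 s^2 (1-s^2)^n this gives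
   xi_{1/2}/xi_{-1/2} ~ (2L/V) K_n/J_n and, bounding difference quotients in V by the mean value
   theorem under the integral sign, |zeta| <~ (n + 1/2) (V/L) xi_{-1/2}. So the product is at most
   (2n+1) K_n/J_n up to a factor 1 + O(1/1000), and integration by parts gives J_n = (2n+3) K_n;
   the limit (2n+1)/(2n+3) is below 4/5 exactly when n <= 3. *)

From Stdlib Require Import Reals Lra Lia Psatz ClassicalEpsilon.
From Coquelicot Require Import Coquelicot.
Open Scope R_scope.

Lemma impint_eq (f : R -> R) (a b v : R) :
  a < b -> has_impint f a b v -> impint f a b = v.
Proof.
  intros Hab HI. unfold impint.
  destruct (excluded_middle_informative _) as [H|H].
  2:{ exfalso; apply H; exists v; exact HI. }
  destruct (constructive_indefinite_description _ H) as [v' HI']; simpl.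
  destruct (Req_dec v' v) as [e|ne]; [exact e|exfalso].
  set (d := Rabs (v' - v)).
  assert (Hd : 0 < d) by (apply Rabs_pos_lt; lra).
  destruct (HI (d/2) ltac:(lra)) as [d1 [Hd1 H1]].
  destruct (HI' (d/2) ltac:(lra)) as [d2 [Hd2 H2]].
  set (c := a + Rmin (Rmin d1 d2) (b - a) / 2).
  assert (Hc : a < c < a + d1 /\ c < a + d2 /\ c <= b).
  { unfold c. pose proof (Rmin_l (Rmin d1 d2) (b - a)). pose proof (Rmin_r (Rmin d1 d2) (b - a)).
    pose proof (Rmin_l d1 d2). pose proof (Rmin_r d1 d2).
    assert (0 < Rmin (Rmin d1 d2) (b - a)) by (apply Rmin_pos; [apply Rmin_pos|]; lra).
    lra. }
  destruct (H1 c ltac:(lra) ltac:(lra)) as [J1 [[p1 e1] B1]].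
  destruct (H2 c ltac:(lra) ltac:(lra)) as [J2 [[p2 e2] B2]].
  assert (HJ : J1 = J2) by (rewrite <- e1, <- e2; apply RiemannInt_P5).
  rewrite <- HJ in B2.
  assert (Htri : Rabs (v' - v) <= Rabs (J1 - v) + Rabs (J1 - v')).
  { replace (v' - v) with ((J1 - v) - (J1 - v')) by ring.
    eapply Rle_trans; [apply Rabs_triang|]. rewrite Rabs_Ropp. lra. }
  unfold d in *. lra.
Qed.

(* Also when [F] is not differentiable at [V], as [deriv] is then [0]. *)
Lemma Rabs_deriv_le (F : R -> R) (V U h : R) :
  0 < h -> (forall t, 0 < t < h -> Rabs ((F (V + t) - F V) / t) <= U) ->
  Rabs (deriv F V) <= U.
Proof.
  intros Hh HB. unfold deriv.
  destruct (excluded_middle_informative _) as [H|H].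
  - destruct (constructive_indefinite_description _ H) as [l Hl]; simpl.
    destruct (Rle_or_lt (Rabs l) U) as [ok|bad]; [exact ok|exfalso].
    destruct (Hl (Rabs l - U) ltac:(lra)) as [del Hdel].
    set (t := Rmin del h / 2).
    assert (Ht : 0 < t < h /\ t < del).
    { pose proof (Rmin_l del h). pose proof (Rmin_r del h).
      assert (0 < Rmin del h) by (apply Rmin_pos; [apply cond_pos|lra]).
      unfold t; lra. }
    specialize (HB t (proj1 Ht)).
    assert (Habs : Rabs t < del) by (rewrite Rabs_pos_eq; lra).
    specialize (Hdel t ltac:(lra) Habs).
    pose proof (Rabs_triang_inv l ((F (V + t) - F V) / t)) as Htri.
    rewrite Rabs_minus_sym in Htri.
    lra.
  - rewrite Rabs_R0. eapply Rle_trans; [apply Rabs_pos|exact (HB (h/2) ltac:(lra))].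
Qed.

Lemma ex_derive_cont (f : R -> R) (x : R) : ex_derive f x -> continuous f x.
Proof. apply (ex_derive_continuous (K := R_AbsRing) (V := R_NormedModule)). Qed.

Lemma ex_RInt_cont (f : R -> R) (a b : R) :
  a <= b -> (forall x, a <= x <= b -> continuous f x) -> ex_RInt f a b.
Proof.
  intros Hab H. apply (ex_RInt_continuous (V := R_CompleteNormedModule)). intros z Hz.
  rewrite Rmin_left in Hz by lra. rewrite Rmax_right in Hz by lra. auto.
Qed.

Lemma continuous_abs_bounded (g : R -> R) (a b : R) : a <= b ->
  (forall s, a <= s <= b -> continuous g s) ->
  exists M, 0 < M /\ forall s, a <= s <= b -> Rabs (g s) <= M.
Proof.
  intros Hab Hc.
  assert (Hc' : forall s, a <= s <= b -> continuity_pt g s)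
    by (intros s Hs; apply continuity_pt_filterlim, Hc, Hs).
  destruct (continuity_ab_maj g a b Hab Hc') as [x1 [H1 _]].
  destruct (continuity_ab_min g a b Hab Hc') as [x2 [H2 _]].
  exists (Rabs (g x1) + Rabs (g x2) + 1). split.
  { pose proof (Rabs_pos (g x1)); pose proof (Rabs_pos (g x2)); lra. }
  intros s Hs. specialize (H1 s Hs). specialize (H2 s Hs).
  pose proof (Rle_abs (g x1)). pose proof (Rabs_pos (g x2)). pose proof (Rabs_pos (g x1)).
  pose proof (Rabs_maj2 (g x2)). apply Rabs_le. split; lra.
Qed.

Lemma sq_le (x y : R) : 0 <= x -> 0 <= y -> y * y <= x * x -> y <= x.
Proof. intros Hx Hy H. destruct (Rle_or_lt y x) as [h|h]; [exact h|]. nra. Qed.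

Lemma RInt_Rmult_l (f : R -> R) (C a b : R) :
  ex_RInt f a b -> RInt (fun x => C * f x) a b = C * RInt f a b.
Proof. apply (RInt_scal (V := R_CompleteNormedModule)). Qed.

Lemma Rabs_RInt_le (f g : R -> R) (a b : R) : a <= b -> ex_RInt f a b -> ex_RInt g a b ->
  (forall x, a < x < b -> Rabs (f x) <= g x) -> Rabs (RInt f a b) <= RInt g a b.
Proof.
  intros Hab Hf Hg H.
  assert (Hup : RInt f a b <= RInt g a b).
  { apply RInt_le; auto. intros x Hx. pose proof (H x Hx). pose proof (Rle_abs (f x)). lra. }
  assert (Hlo : RInt (fun x => - g x) a b <= RInt f a b).
  { apply RInt_le; auto.
    - apply (ex_RInt_opp (V := R_NormedModule)), Hg.
    - intros x Hx. pose proof (H x Hx). pose proof (Rabs_maj2 (f x)). lra. }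
  rewrite (RInt_opp (V := R_CompleteNormedModule)) in Hlo by exact Hg.
  apply Rabs_le. unfold opp in Hlo; simpl in Hlo. lra.
Qed.

Lemma ex_RInt_derivable (f : R -> R) (a b : R) :
  a <= b -> (forall x, ex_derive f x) -> ex_RInt f a b.
Proof. intros Hab Hf. apply ex_RInt_cont; [exact Hab|]. intros x _. apply ex_derive_cont, Hf. Qed.

Lemma has_integral_RInt (f : R -> R) (a b : R) :
  ex_RInt f a b -> has_integral f a b (RInt f a b).
Proof.
  intros Hf. exists (ex_RInt_Reals_0 _ _ _ Hf). symmetry. apply RInt_Reals.
Qed.

Lemma RInt_sqr_substitution (ft : R -> R) (W L a : R) :
  0 <= a <= 1 -> (forall s, a <= s <= 1 -> continuous ft (W + L * s ^ 2)) ->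
  RInt ft (W + L * a ^ 2) (W + L) = RInt (fun s => 2 * L * s * ft (W + L * s ^ 2)) a 1.
Proof.
  intros Ha Hft.
  assert (Hder : forall s, Rmin a 1 <= s <= Rmax a 1 ->
    is_derive (fun s => W + L * s ^ 2) s (2 * L * s) /\ continuous (fun s => 2 * L * s) s).
  { intros s _. split; [auto_derive; [easy|ring]|].
    apply ex_derive_cont. auto_derive. easy. }
  assert (Hcont : forall s, Rmin a 1 <= s <= Rmax a 1 -> continuous ft (W + L * s ^ 2)).
  { intros s Hs. rewrite Rmin_left in Hs by lra. rewrite Rmax_right in Hs by lra. auto. }
  pose proof (is_RInt_comp (V := R_CompleteNormedModule) ft _ _ a 1 Hcont Hder) as Hc.
  cbv beta in Hc. replace (W + L * 1 ^ 2) with (W + L) in Hc by ring.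
  symmetry. apply is_RInt_unique. exact Hc.
Qed.

Lemma has_integral_sqr_substitution (f ft g : R -> R) (W E0 a : R) :
  W < E0 -> 0 < a <= 1 ->
  (forall E, W < E < E0 -> f E = ft E) ->
  (forall E, W < E <= E0 -> continuous ft E) ->
  (forall s, 0 < s <= 1 -> g s = 2 * (E0 - W) * s * ft (W + (E0 - W) * s ^ 2)) ->
  has_integral f (W + (E0 - W) * a ^ 2) E0 (RInt g a 1).
Proof.
  intros HW Ha Hf Hft Hsub.
  set (L := E0 - W). assert (HL : 0 < L) by (unfold L; lra).
  assert (Himg : forall s, 0 < s <= 1 -> W < W + L * s ^ 2 <= E0).
  { intros s Hs. assert (0 < s ^ 2 <= 1).
    { split; [apply pow_lt|rewrite <- (pow1 2); apply pow_incr]; lra. }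
    unfold L; nra. }
  pose proof (Himg a Ha) as Hc.
  assert (Hexf : ex_RInt f (W + L * a ^ 2) E0).
  { apply ex_RInt_ext with ft.
    - intros x Hx. rewrite Rmin_left, Rmax_right in Hx by lra. symmetry. apply Hf. lra.
    - apply ex_RInt_cont; [lra|intros; apply Hft; lra]. }
  replace (RInt g a 1) with (RInt f (W + L * a ^ 2) E0) by
    (rewrite (RInt_ext f ft) by (intros x Hx; rewrite Rmin_left, Rmax_right in Hx by lra; apply Hf; lra);
     replace E0 with (W + L) by (unfold L; ring);
     rewrite RInt_sqr_substitution by (lra || (intros s Hs; apply Hft, Himg; lra));
     symmetry; apply RInt_ext; intros s Hs; rewrite Rmin_left, Rmax_right in Hs by lra;
     apply Hsub; lra).
  apply has_integral_RInt, Hexf.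
Qed.

Lemma has_impint_sqr_substitution (f ft g : R -> R) (W E0 : R) :
  W < E0 ->
  (forall E, W < E < E0 -> f E = ft E) ->
  (forall E, W < E <= E0 -> continuous ft E) ->
  (forall s, 0 <= s <= 1 -> continuous g s) ->
  (forall s, 0 < s <= 1 -> g s = 2 * (E0 - W) * s * ft (W + (E0 - W) * s ^ 2)) ->
  has_impint f W E0 (RInt g 0 1).
Proof.
  intros HW Hf Hft Hg Hsub eps Heps.
  set (L := E0 - W). assert (HL : 0 < L) by (unfold L; lra).
  destruct (continuous_abs_bounded g 0 1 ltac:(lra) Hg) as [M [HM HMb]].
  set (m := Rmin 1 (eps / (2 * M))).
  assert (Hm : 0 < m <= 1 /\ m * M <= eps / 2).
  { assert (0 < eps / (2 * M)) by (apply Rdiv_lt_0_compat; lra).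
    pose proof (Rmin_l 1 (eps / (2 * M))). pose proof (Rmin_r 1 (eps / (2 * M))).
    split; [split; [apply Rmin_pos|]; unfold m; lra|].
    apply (Rmult_le_reg_r (/ M)); [apply Rinv_0_lt_compat; lra|].
    replace (eps / 2 * / M) with (eps / (2 * M)) by (field; lra).
    replace (m * M * / M) with m by (field; lra). unfold m; lra. }
  exists (L * m ^ 2). split; [apply Rmult_lt_0_compat; [lra|apply pow_lt; lra]|].
  intros c Hc HcE.
  set (a := sqrt ((c - W) / L)).
  assert (Hq : 0 < (c - W) / L <= 1).
  { split; [apply Rdiv_lt_0_compat; lra|]. apply (proj1 (Rdiv_le_1 _ _ HL)). unfold L; lra. }
  assert (Hqm : (c - W) / L < m ^ 2) by (apply (proj2 (Rlt_div_l _ _ _ HL)); lra).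
  assert (Ha : 0 < a <= 1 /\ a < m).
  { split; [split|].
    - apply sqrt_lt_R0. lra.
    - rewrite <- sqrt_1. apply sqrt_le_1_alt. lra.
    - rewrite <- (sqrt_pow2 m) by lra. apply sqrt_lt_1_alt. lra. }
  replace c with (W + L * a ^ 2) by (unfold a; rewrite pow2_sqrt by lra; field; lra).
  exists (RInt g a 1). split; [apply has_integral_sqr_substitution with ft; auto; lra|].
  assert (Hex0 : ex_RInt g 0 a) by (apply ex_RInt_cont; [lra|intros; apply Hg; lra]).
  assert (Hex1 : ex_RInt g a 1) by (apply ex_RInt_cont; [lra|intros; apply Hg; lra]).
  rewrite <- (RInt_Chasles g 0 a 1 Hex0 Hex1). unfold plus; simpl.
  replace (RInt g a 1 - (RInt g 0 a + RInt g a 1)) with (- RInt g 0 a) by ring.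
  rewrite Rabs_Ropp.
  eapply Rle_lt_trans; [apply (abs_RInt_le_const g 0 a M); [lra|exact Hex0|]|].
  - intros s Hs. apply HMb. lra.
  - assert (a * M < m * M) by (apply Rmult_lt_compat_r; lra). lra.
Qed.

Definition moment0 (n : nat) : R := RInt (fun s => (1 - s ^ 2) ^ n) 0 1.
Definition moment2 (n : nat) : R := RInt (fun s => s ^ 2 * (1 - s ^ 2) ^ n) 0 1.

Lemma moment0_pos (n : nat) : 0 < moment0 n.
Proof.
  apply RInt_gt_0; [lra| |].
  - intros s Hs. apply pow_lt. nra.
  - intros s _. apply ex_derive_cont. auto_derive. easy.
Qed.

(* Integration by parts: [s (1 - s^2)^(n+1)] vanishes at both ends and has derivative
   [(1 - s^2)^n - (2n+3) s^2 (1 - s^2)^n]. *)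
Lemma moment0_eq (n : nat) : moment0 n = (2 * INR n + 3) * moment2 n.
Proof.
  set (c := 2 * INR n + 3).
  assert (H0 : is_RInt (fun s => (1 - s ^ 2) ^ n) 0 1 (moment0 n))
    by (apply (RInt_correct (V := R_CompleteNormedModule)), ex_RInt_derivable; [lra|intros; auto_derive; easy]).
  assert (H2 : is_RInt (fun s => c * (s ^ 2 * (1 - s ^ 2) ^ n)) 0 1 (c * moment2 n))
    by (apply (is_RInt_scal (V := R_NormedModule)), (RInt_correct (V := R_CompleteNormedModule)),
          ex_RInt_derivable; [lra|intros; auto_derive; easy]).
  pose proof (is_RInt_minus (V := R_NormedModule) _ _ _ _ _ _ H0 H2) as Hdiff.
  assert (Hibp : is_RInt (fun s => minus ((1 - s ^ 2) ^ n) (c * (s ^ 2 * (1 - s ^ 2) ^ n))) 0 1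
                   (minus (1 * (1 - 1 ^ 2) ^ S n) (0 * (1 - 0 ^ 2) ^ S n))).
  { apply (is_RInt_derive (V := R_CompleteNormedModule) (fun s => s * (1 - s ^ 2) ^ S n)).
    - intros s _. auto_derive; [easy|]. unfold minus, plus, opp, c; simpl.
      change (match n with 0%nat => 1 | S _ => INR n + 1 end) with (INR (S n)).
      rewrite S_INR. unfold Rminus. ring.
    - intros s _. apply ex_derive_cont. unfold minus, plus, opp; simpl. auto_derive. easy. }
  unfold minus, plus, opp in Hdiff, Hibp; simpl in Hdiff, Hibp.
  apply (is_RInt_unique (V := R_CompleteNormedModule)) in Hdiff, Hibp.
  rewrite Hdiff in Hibp. lra.
Qed.

(** * Factorization of phi near 0 *)

Lemma CV_radius_decr_n (a : nat -> R) (n : nat) : CV_radius (PS_decr_n a n) = CV_radius a.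
Proof.
  induction n as [|n IH].
  - apply CV_radius_ext. reflexivity.
  - rewrite <- IH, <- (CV_radius_decr_1 (PS_decr_n a n)).
    apply CV_radius_ext. intros k. unfold PS_decr_n, PS_decr_1. f_equal. lia.
Qed.

Lemma standing_assumptions_factor (phi : R -> R) (n : nat) : standing_assumptions phi n ->
  exists (b : nat -> R) (rho : R), 0 < rho /\ Rbar_le rho (CV_radius b) /\
    (forall u, 0 <= u < rho -> phi u = u ^ n * PSeries b u) /\ 0 < PSeries b 0.
Proof.
  intros [_ [_ [_ [a [r [Hr [Hser [Hz Hpos]]]]]]]].
  set (rho := Rmin (r / 2) 1).
  assert (Hrho : 0 < rho /\ rho < r /\ rho <= 1).
  { pose proof (Rmin_l (r / 2) 1). pose proof (Rmin_r (r / 2) 1).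
    assert (0 < rho) by (apply Rmin_pos; lra). unfold rho in *; lra. }
  assert (Hrad : Rbar_le rho (CV_radius a)).
  { apply Rbar_not_lt_le. intros Hlt.
    rewrite <- (Rabs_pos_eq rho) in Hlt by lra.
    apply (CV_disk_outside a rho Hlt).
    assert (Hex : ex_series (fun k => scal (pow_n rho k) (a k))).
    { eexists. apply is_pseries_Reals, Hser; lra. }
    apply ex_series_lim_0 in Hex.
    eapply is_lim_seq_ext; [|exact Hex].
    intros k. simpl. unfold scal; simpl; unfold mult; simpl. rewrite pow_n_pow. ring. }
  exists (PS_decr_n a n), rho. repeat split; try lra.
  - rewrite CV_radius_decr_n. exact Hrad.
  - intros u Hu. rewrite <- PSeries_decr_n_aux by auto.
    symmetry. apply is_pseries_unique, is_pseries_Reals, Hser; lra.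
  - rewrite PSeries_0. unfold PS_decr_n. rewrite Nat.add_0_r. exact Hpos.
Qed.

Lemma continuity_pt_eps (f : R -> R) (x : R) : continuity_pt f x ->
  forall eps, 0 < eps -> exists d, 0 < d /\ forall y, Rabs (y - x) < d -> Rabs (f y - f x) < eps.
Proof.
  intros Hc eps He. destruct (Hc eps He) as [d [Hd Hy]].
  exists d; split; auto. intros y Hyx.
  destruct (Req_dec y x) as [->|ne].
  - rewrite Rminus_eq_0, Rabs_R0; auto.
  - apply (Hy y). split; [split; [exact I|auto]|exact Hyx].
Qed.

Lemma PSeries_near_0 (b : nat -> R) (eps : R) : 0 < eps -> Rbar_lt 0 (CV_radius b) ->
  exists d, 0 < d /\ forall u, Rabs u < d ->
    Rabs (PSeries b u - PSeries b 0) < eps /\ Rabs (u * PSeries (PS_derive b) u) < eps.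
Proof.
  intros Heps Hrad.
  assert (H0 : Rbar_lt (Rabs 0) (CV_radius b)) by (rewrite Rabs_R0; exact Hrad).
  assert (Hd0 : Rbar_lt (Rabs 0) (CV_radius (PS_derive b))) by (rewrite CV_radius_derive; exact H0).
  destruct (continuity_pt_eps _ _ (PSeries_continuity b 0 H0) eps Heps) as [d1 [Hd1 H1]].
  assert (Hc : continuity_pt (fun u => u * PSeries (PS_derive b) u) 0)
    by (apply (continuity_pt_mult id); [apply continuity_pt_id|apply PSeries_continuity, Hd0]).
  destruct (continuity_pt_eps _ _ Hc eps Heps) as [d2 [Hd2 H2]].
  exists (Rmin d1 d2). split; [apply Rmin_pos; lra|].
  intros u Hu. pose proof (Rmin_l d1 d2). pose proof (Rmin_r d1 d2).
  rewrite <- (Rminus_0_r u) in Hu.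
  split; [apply H1; lra|].
  specialize (H2 u ltac:(lra)). rewrite Rmult_0_l, Rminus_0_r in H2. exact H2.
Qed.

(* The margin [4/5 - 7/9 = 1/45] left for [n = 3] dictates how tightly [PSeries b] must stay
   near its value at [0]. *)
Definition tol : R := / 1000.

Definition phi_ps (b : nat -> R) (n : nat) (u : R) : R := u ^ n * PSeries b u.

(* [PSeries b] is the factor [q] in [phi u = u^n q u]; only [0 <= u <= u0] is used. *)
Record local_factorization (phi : R -> R) (n : nat) (b : nat -> R) (u0 : R) : Prop := {
  lf_u0_pos : 0 < u0;
  lf_u0_small : u0 <= / 1000;
  lf_radius : forall u, Rabs u <= u0 -> Rbar_lt (Rabs u) (CV_radius b);
  lf_phi : forall u, 0 <= u <= u0 -> phi u = phi_ps b n u;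
  lf_q0_pos : 0 < PSeries b 0;
  lf_q_close : forall u, Rabs u <= u0 -> Rabs (PSeries b u - PSeries b 0) <= tol * PSeries b 0;
  lf_dq_small : forall u, Rabs u <= u0 -> Rabs (u * PSeries (PS_derive b) u) <= tol * PSeries b 0
}.

Lemma local_factorization_exists (phi : R -> R) (n : nat) :
  standing_assumptions phi n -> exists b u0, local_factorization phi n b u0.
Proof.
  intros H. destruct (standing_assumptions_factor phi n H) as [b [rho [Hrho [Hrad [Hphi Hq0]]]]].
  assert (Htol : 0 < tol * PSeries b 0) by (unfold tol; lra).
  destruct (PSeries_near_0 b _ Htol) as [d [Hd Hnear]].
  { eapply Rbar_lt_le_trans; [|exact Hrad]. exact Hrho. }
  set (u0 := Rmin (Rmin (/ 1000) (rho / 2)) (d / 2)).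
  assert (Hu0 : 0 < u0 /\ u0 <= / 1000 /\ u0 < rho /\ u0 < d).
  { pose proof (Rmin_l (Rmin (/ 1000) (rho / 2)) (d / 2)).
    pose proof (Rmin_r (Rmin (/ 1000) (rho / 2)) (d / 2)).
    pose proof (Rmin_l (/ 1000) (rho / 2)). pose proof (Rmin_r (/ 1000) (rho / 2)).
    assert (0 < u0) by (repeat apply Rmin_pos; lra). unfold u0 in *; lra. }
  exists b, u0. split; try tauto.
  - intros u Hu. eapply Rbar_lt_le_trans; [|exact Hrad]. simpl. lra.
  - intros u Hu. apply Hphi. lra.
  - intros u Hu. left. apply Hnear. lra.
  - intros u Hu. left. apply Hnear. lra.
Qed.

(** * The substitution [E = W + (E0 - W) s^2] *)

Lemma Rpower_half (x : R) : 0 < x -> Rpower x (1/2) = sqrt x.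
Proof. intros Hx. replace (1/2) with (/2) by field. apply Rpower_sqrt, Hx. Qed.

Lemma Rpower_mhalf (x : R) : 0 < x -> Rpower x (-1/2) = / sqrt x.
Proof.
  intros Hx. replace (-1/2) with (- (/2)) by field. rewrite Rpower_Ropp, Rpower_sqrt; auto.
Qed.

Lemma sqr_ratio_sub1_pos (W E : R) : 0 < W < E -> 0 < E ^ 2 / W ^ 2 - 1.
Proof.
  intros HWE. replace (E ^ 2 / W ^ 2 - 1) with ((E ^ 2 - W ^ 2) / W ^ 2) by (field; lra).
  apply Rdiv_lt_0_compat; [nra|apply pow_lt; lra].
Qed.

Lemma sqrt_sqr_ratio_sub1 (W L s : R) : 0 < W -> 0 < L -> 0 < s ->
  sqrt ((W + L * s ^ 2) ^ 2 / W ^ 2 - 1) = sqrt L * s * sqrt (2 * W + L * s ^ 2) / W.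
Proof.
  intros HW HL Hs.
  assert (Hs2 : 0 < L * s ^ 2) by (apply Rmult_lt_0_compat; [lra|apply pow_lt; lra]).
  apply sqrt_lem_1.
  - left. apply sqr_ratio_sub1_pos. lra.
  - left. apply Rdiv_lt_0_compat; [|lra].
    apply Rmult_lt_0_compat; [apply Rmult_lt_0_compat; [apply sqrt_lt_R0|]|apply sqrt_lt_R0]; lra.
  - replace (sqrt L * s * sqrt (2 * W + L * s ^ 2) / W * (sqrt L * s * sqrt (2 * W + L * s ^ 2) / W))
      with ((sqrt L * sqrt L) * s ^ 2 * (sqrt (2 * W + L * s ^ 2) * sqrt (2 * W + L * s ^ 2)) / W ^ 2)
      by (field; lra).
    rewrite !sqrt_sqrt by lra. field. lra.
Qed.

Lemma continuous_Rmult (f g : R -> R) (x : R) :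
  continuous f x -> continuous g x -> continuous (fun x => f x * g x) x.
Proof. apply (continuous_mult (K := R_AbsRing)). Qed.

Definition dphi_ps (b : nat -> R) (n : nat) (u : R) : R :=
  INR n * u ^ pred n * PSeries b u + u ^ n * PSeries (PS_derive b) u.

(* The value of [1 - E/E0] at [E = W + (E0 - W) s^2]; this substitution removes the
   singularity of the integrands at [E = W]. *)
Definition usub (E0 W s : R) : R := (E0 - W) * (1 - s ^ 2) / E0.

Definition w_minus (E0 W s : R) : R :=
  2 * W * sqrt (E0 - W) / sqrt (2 * W + (E0 - W) * s ^ 2).

Definition w_plus (E0 W s : R) : R :=
  2 * (E0 - W) * sqrt (E0 - W) * s ^ 2 * sqrt (2 * W + (E0 - W) * s ^ 2) / W.

Definition g_minus (b : nat -> R) (n : nat) (E0 W s : R) : R :=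
  phi_ps b n (usub E0 W s) * w_minus E0 W s.

Definition g_plus (b : nat -> R) (n : nat) (E0 W s : R) : R :=
  phi_ps b n (usub E0 W s) * w_plus E0 W s.

Lemma usub_range (E0 W s u0 : R) : 0 < E0 -> E0 * (1 - u0) < W < E0 -> 0 <= s <= 1 ->
  0 <= usub E0 W s <= u0.
Proof.
  intros HE HW Hs. unfold usub.
  assert (0 <= 1 - s ^ 2 <= 1) by nra.
  split.
  - apply Rmult_le_pos; [apply Rmult_le_pos; lra|]. apply Rlt_le, Rinv_0_lt_compat; lra.
  - apply (Rmult_le_reg_r E0); [lra|]. unfold Rdiv. rewrite Rmult_assoc, Rinv_l by lra. nra.
Qed.

Section Integrands.

Variables (phi : R -> R) (n : nat) (b : nat -> R) (u0 E0 : R).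
Hypothesis LF : local_factorization phi n b u0.
Hypothesis HE0 : 0 < E0.

Lemma phi_ps_derive (u : R) : Rabs u <= u0 -> is_derive (phi_ps b n) u (dphi_ps b n u).
Proof.
  intros Hu. pose proof (lf_radius _ _ _ _ LF u Hu) as Hr.
  unfold phi_ps. auto_derive.
  - apply ex_derive_PSeries, Hr.
  - rewrite Derive_PSeries by exact Hr. unfold dphi_ps. ring.
Qed.

Lemma phi_ps_continuous (u : R) : Rabs u <= u0 -> continuous (phi_ps b n) u.
Proof. intros Hu. apply ex_derive_cont. eexists. apply phi_ps_derive, Hu. Qed.

Lemma Phi_eq_phi_ps (E : R) : E0 * (1 - u0) < E < E0 -> Phi phi E0 E = phi_ps b n (1 - E / E0).
Proof.
  intros HE. unfold Phi. apply (lf_phi _ _ _ _ LF).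
  assert (E / E0 < 1) by (apply (proj1 (Rdiv_lt_1 _ _ HE0)); lra).
  assert (1 - u0 < E / E0) by (apply (proj1 (Rlt_div_r _ _ _ HE0)); lra).
  lra.
Qed.

Lemma phi_ps_shift_continuous (E : R) : E0 * (1 - u0) < E <= E0 ->
  continuous (fun E => phi_ps b n (1 - E / E0)) E.
Proof.
  intros HE. apply continuous_comp.
  - apply ex_derive_cont. auto_derive. lra.
  - apply phi_ps_continuous.
    assert (E / E0 <= 1) by (apply (proj1 (Rdiv_le_1 _ _ HE0)); lra).
    assert (1 - u0 < E / E0) by (apply (proj1 (Rlt_div_r _ _ _ HE0)); lra).
    rewrite Rabs_pos_eq; lra.
Qed.

Lemma phi_ps_usub_continuous (W s : R) : E0 * (1 - u0) < W < E0 -> 0 <= s <= 1 ->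
  continuous (fun s => phi_ps b n (usub E0 W s)) s.
Proof.
  intros HW Hs. apply continuous_comp.
  - apply ex_derive_cont. unfold usub. auto_derive. lra.
  - apply phi_ps_continuous. pose proof (usub_range E0 W s u0 HE0 HW Hs).
    rewrite Rabs_pos_eq; lra.
Qed.

Lemma g_minus_continuous (W s : R) : E0 * (1 - u0) < W < E0 -> 0 <= s <= 1 ->
  continuous (g_minus b n E0 W) s.
Proof.
  intros HW Hs. pose proof (lf_u0_small _ _ _ _ LF).
  apply continuous_Rmult; [apply phi_ps_usub_continuous; auto|].
  apply ex_derive_cont. unfold w_minus.
  assert (HD : 0 < 2 * W + (E0 - W) * (s * (s * 1))) by nra.
  auto_derive. repeat split; [exact HD|apply Rgt_not_eq, sqrt_lt_R0, HD].
Qed.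

Lemma g_plus_continuous (W s : R) : E0 * (1 - u0) < W < E0 -> 0 <= s <= 1 ->
  continuous (g_plus b n E0 W) s.
Proof.
  intros HW Hs. pose proof (lf_u0_small _ _ _ _ LF).
  apply continuous_Rmult; [apply phi_ps_usub_continuous; auto|].
  apply ex_derive_cont. unfold w_plus.
  assert (HD : 0 < 2 * W + (E0 - W) * (s * (s * 1))) by nra.
  auto_derive. repeat split; lra.
Qed.

Lemma impint_xi_minus (W : R) : E0 * (1 - u0) < W < E0 ->
  impint (fun E => Phi phi E0 E * Rpower (E ^ 2 / W ^ 2 - 1) (-1/2)) W E0
  = RInt (g_minus b n E0 W) 0 1.
Proof.
  intros HW. pose proof (lf_u0_small _ _ _ _ LF).
  assert (HW0 : 0 < W) by nra.
  apply impint_eq; [lra|].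
  apply has_impint_sqr_substitution with
    (ft := fun E => phi_ps b n (1 - E / E0) / sqrt (E ^ 2 / W ^ 2 - 1)); [lra| | | |].
  - intros E HE. rewrite Phi_eq_phi_ps, Rpower_mhalf by (lra || apply sqr_ratio_sub1_pos; lra).
    reflexivity.
  - intros E HE. apply continuous_Rmult; [apply phi_ps_shift_continuous; lra|].
    apply ex_derive_cont. pose proof (sqr_ratio_sub1_pos W E ltac:(lra)) as Hpos.
    simpl in Hpos; unfold Rdiv, Rminus in Hpos.
    auto_derive. repeat split; [exact Hpos|apply Rgt_not_eq, sqrt_lt_R0, Hpos].
  - intros s Hs. apply g_minus_continuous; auto.
  - intros s Hs. unfold g_minus, w_minus.
    replace (1 - (W + (E0 - W) * s ^ 2) / E0) with (usub E0 W s) by (unfold usub; field; lra).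
    rewrite sqrt_sqr_ratio_sub1 by lra.
    assert (0 < sqrt (E0 - W)) by (apply sqrt_lt_R0; lra).
    assert (0 < sqrt (2 * W + (E0 - W) * s ^ 2)) by (apply sqrt_lt_R0; nra).
    replace (2 * (E0 - W)) with (2 * (sqrt (E0 - W) * sqrt (E0 - W))) by (rewrite sqrt_sqrt; lra).
    field. lra.
Qed.

Lemma impint_xi_plus (W : R) : E0 * (1 - u0) < W < E0 ->
  impint (fun E => Phi phi E0 E * Rpower (E ^ 2 / W ^ 2 - 1) (1/2)) W E0
  = RInt (g_plus b n E0 W) 0 1.
Proof.
  intros HW. pose proof (lf_u0_small _ _ _ _ LF).
  assert (HW0 : 0 < W) by nra.
  apply impint_eq; [lra|].
  apply has_impint_sqr_substitution with
    (ft := fun E => phi_ps b n (1 - E / E0) * sqrt (E ^ 2 / W ^ 2 - 1)); [lra| | | |].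
  - intros E HE. rewrite Phi_eq_phi_ps, Rpower_half by (lra || apply sqr_ratio_sub1_pos; lra).
    reflexivity.
  - intros E HE. apply continuous_Rmult; [apply phi_ps_shift_continuous; lra|].
    apply ex_derive_cont. pose proof (sqr_ratio_sub1_pos W E ltac:(lra)) as Hpos.
    simpl in Hpos; unfold Rdiv, Rminus in Hpos.
    auto_derive. exact Hpos.
  - intros s Hs. apply g_plus_continuous; auto.
  - intros s Hs. unfold g_plus, w_plus.
    replace (1 - (W + (E0 - W) * s ^ 2) / E0) with (usub E0 W s) by (unfold usub; field; lra).
    rewrite sqrt_sqr_ratio_sub1 by lra. field. lra.
Qed.

End Integrands.

(** * Estimates of the integrands *)

Definition dlog_w_minus (E0 W s : R) : R :=
  1 / W - 1 / (2 * (E0 - W)) - (2 - s ^ 2) / (2 * (2 * W + (E0 - W) * s ^ 2)).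

Definition dg_minus (b : nat -> R) (n : nat) (E0 W s : R) : R :=
  - ((1 - s ^ 2) / E0) * dphi_ps b n (usub E0 W s) * w_minus E0 W s
  + phi_ps b n (usub E0 W s) * (w_minus E0 W s * dlog_w_minus E0 W s).

Lemma usub_pow (E0 W s : R) (n : nat) : 0 < E0 ->
  usub E0 W s ^ n = ((E0 - W) / E0) ^ n * (1 - s ^ 2) ^ n.
Proof.
  intros HE. rewrite <- Rpow_mult_distr. unfold usub. f_equal. field. lra.
Qed.

Lemma w_minus_derive (E0 W s : R) : 0 < W < E0 -> 0 <= s <= 1 ->
  is_derive (fun w => w_minus E0 w s) W (w_minus E0 W s * dlog_w_minus E0 W s).
Proof.
  intros HW Hs. unfold w_minus, dlog_w_minus.
  assert (HL : 0 < E0 - W) by lra.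
  assert (HD : 0 < 2 * W + (E0 - W) * s ^ 2) by nra.
  assert (HD' : 0 < 2 * W + (E0 - W) * (s * (s * 1))) by (simpl in HD; exact HD).
  auto_derive.
  - repeat split; try lra; try exact HD'; apply Rgt_not_eq, sqrt_lt_R0; exact HD'.
  - replace (E0 + - W) with (E0 - W) by ring. replace (s * (s * 1)) with (s ^ 2) by ring.
    pose proof (sqrt_lt_R0 _ HL). pose proof (sqrt_lt_R0 _ HD).
    pose proof (sqrt_sqrt _ (Rlt_le _ _ HL)) as HS2. pose proof (sqrt_sqrt _ (Rlt_le _ _ HD)) as HT2.
    set (S := sqrt (E0 - W)) in *. set (T := sqrt (2 * W + (E0 - W) * s ^ 2)) in *.
    clearbody S T. rewrite <- HT2, <- HS2. field. repeat split; lra.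
Qed.

Lemma mul_dphi_ps (b : nat -> R) (n : nat) (u : R) :
  u * dphi_ps b n u = u ^ n * (INR n * PSeries b u + u * PSeries (PS_derive b) u).
Proof. unfold dphi_ps. destruct n; simpl; ring. Qed.

Lemma dg_minus_factor (b : nat -> R) (n : nat) (E0 W s : R) : 0 < E0 -> W < E0 ->
  let u := usub E0 W s in
  dg_minus b n E0 W s = w_minus E0 W s / (E0 - W) * u ^ n *
    (- (INR n * PSeries b u + u * PSeries (PS_derive b) u)
     + PSeries b u * (dlog_w_minus E0 W s * (E0 - W))).
Proof.
  intros HE HW u. unfold dg_minus. fold u.
  replace ((1 - s ^ 2) / E0) with (u / (E0 - W)) by (unfold u, usub; field; lra).
  replace (- (u / (E0 - W)) * dphi_ps b n u * w_minus E0 W s)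
    with (- (u * dphi_ps b n u) * w_minus E0 W s / (E0 - W)) by (field; lra).
  rewrite mul_dphi_ps. unfold phi_ps. field. lra.
Qed.

Lemma dlog_w_minus_bound (E0 W s u0 : R) : 0 < E0 -> u0 <= / 2 ->
  E0 * (1 - u0) < W < E0 -> 0 <= s <= 1 ->
  Rabs (dlog_w_minus E0 W s * (E0 - W)) <= 1/2 + 2 * u0.
Proof.
  intros HE Hu0 HW Hs. unfold dlog_w_minus.
  assert (HW0 : E0 / 2 < W) by nra.
  assert (Hu : 0 < u0) by nra.
  assert (HD : 2 * W <= 2 * W + (E0 - W) * s ^ 2) by nra.
  set (r := (E0 - W) / W).
  assert (Hr : 0 < r <= 2 * u0).
  { unfold r. split; [apply Rdiv_lt_0_compat; lra|].
    apply (Rle_div_l _ _ W); [lra|].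
    assert (u0 * E0 <= u0 * (2 * W)) by (apply Rmult_le_compat_l; lra). nra. }
  set (t := (2 - s ^ 2) / (2 * (2 * W + (E0 - W) * s ^ 2)) * (E0 - W)).
  assert (Ht : 0 <= t <= r).
  { unfold t, r. split.
    - apply Rmult_le_pos; [|lra]. apply Rmult_le_pos; [nra|].
      apply Rlt_le, Rinv_0_lt_compat. lra.
    - unfold Rdiv. rewrite (Rmult_comm (E0 - W) (/ W)).
      apply Rmult_le_compat_r; [lra|].
      apply (Rmult_le_reg_r (2 * (2 * W + (E0 - W) * s ^ 2))); [lra|].
      rewrite Rmult_assoc, Rinv_l, Rmult_1_r by lra.
      replace (/ W * (2 * (2 * W + (E0 - W) * s ^ 2))) with (4 + 2 * ((E0 - W) * s ^ 2) / W)
        by (field; lra).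
      assert (0 <= (E0 - W) * s ^ 2 / W) by (apply Rmult_le_pos; [nra|apply Rlt_le, Rinv_0_lt_compat; lra]).
      unfold Rdiv in *. nra. }
  replace ((1 / W - 1 / (2 * (E0 - W)) - (2 - s ^ 2) / (2 * (2 * W + (E0 - W) * s ^ 2))) * (E0 - W))
    with (r - 1/2 - t) by (unfold r, t; field; lra).
  apply Rabs_le. lra.
Qed.

Lemma w_minus_ratio_bound (E0 V W s : R) : 0 < V <= W -> W < E0 ->
  (1 - tol) * (E0 - V) <= E0 - W -> 0 <= s <= 1 ->
  0 <= w_minus E0 W s / (E0 - W) <= sqrt (2 * E0) / ((1 - tol) * sqrt (E0 - V)).
Proof.
  intros HV HW HL Hs. unfold w_minus, tol in *.
  assert (HD : 2 * W <= 2 * W + (E0 - W) * s ^ 2) by nra.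
  pose proof (sqrt_lt_R0 (E0 - W) ltac:(lra)). pose proof (sqrt_lt_R0 (E0 - V) ltac:(lra)).
  pose proof (sqrt_lt_R0 (2 * W + (E0 - W) * s ^ 2) ltac:(lra)).
  pose proof (sqrt_lt_R0 (2 * W) ltac:(lra)). pose proof (sqrt_lt_R0 (2 * E0) ltac:(lra)).
  pose proof (sqrt_sqrt (E0 - W) ltac:(lra)) as HS'2. pose proof (sqrt_sqrt (E0 - V) ltac:(lra)) as HS2.
  pose proof (sqrt_sqrt (2 * W + (E0 - W) * s ^ 2) ltac:(lra)) as HT2.
  pose proof (sqrt_sqrt (2 * W) ltac:(lra)) as HW2. pose proof (sqrt_sqrt (2 * E0) ltac:(lra)) as HE2.
  set (S' := sqrt (E0 - W)) in *. set (S := sqrt (E0 - V)) in *.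
  set (T := sqrt (2 * W + (E0 - W) * s ^ 2)) in *.
  set (R2 := sqrt (2 * W)) in *. set (E2 := sqrt (2 * E0)) in *.
  replace (2 * W * S' / T / (E0 - W)) with (R2 * R2 / (S' * T)) by (rewrite <- HS'2, HW2; field; lra).
  assert (HTR : R2 <= T) by (apply sq_le; lra).
  assert (HRE : R2 <= E2) by (apply sq_le; lra).
  assert (HSS : (1 - /1000) * S <= S') by (apply sq_le; nra).
  split.
  - apply Rlt_le, Rdiv_lt_0_compat; nra.
  - apply (Rmult_le_reg_r (S' * T * ((1 - /1000) * S))); [apply Rmult_lt_0_compat; nra|].
    replace (R2 * R2 / (S' * T) * (S' * T * ((1 - / 1000) * S))) with (R2 * R2 * ((1 - /1000) * S))
      by (field; lra).
    replace (E2 / ((1 - / 1000) * S) * (S' * T * ((1 - / 1000) * S))) with (E2 * T * S')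
      by (field; lra).
    apply Rmult_le_compat; nra.
Qed.

(* Up to the tolerances this is [n + 1/2], the exponent of [E0 - W] in [xi_{-1/2}(W)]. *)
Definition log_deriv_bound (n : nat) (u0 : R) : R :=
  INR n * (1 + tol) + tol + (1 + tol) * (1/2 + 2 * u0).

Definition coef_plus (b : nat -> R) (n : nat) (E0 V : R) : R :=
  ((E0 - V) / E0) ^ n * ((1 + tol) * PSeries b 0) *
  (2 * (E0 - V) * sqrt (E0 - V) * sqrt (V + E0) / V).

Definition coef_minus (b : nat -> R) (n : nat) (E0 V : R) : R :=
  ((E0 - V) / E0) ^ n * ((1 - tol) * PSeries b 0) * (2 * V * sqrt (E0 - V) / sqrt (V + E0)).

Definition coef_deriv (b : nat -> R) (n : nat) (u0 E0 V : R) : R :=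
  ((E0 - V) / E0) ^ n * PSeries b 0 * (sqrt (2 * E0) / ((1 - tol) * sqrt (E0 - V))) * log_deriv_bound n u0.

Section Bounds.

Variables (phi : R -> R) (n : nat) (b : nat -> R) (u0 E0 : R).
Hypothesis LF : local_factorization phi n b u0.
Hypothesis HE0 : 0 < E0.

Lemma lf_q_between (u : R) : Rabs u <= u0 ->
  (1 - tol) * PSeries b 0 <= PSeries b u <= (1 + tol) * PSeries b 0.
Proof.
  intros Hu. pose proof (lf_q_close _ _ _ _ LF u Hu) as H. apply Rabs_le_between' in H. lra.
Qed.

Lemma g_plus_bounds (V s : R) : E0 * (1 - u0) < V < E0 -> 0 <= s <= 1 ->
  0 <= g_plus b n E0 V s <= coef_plus b n E0 V * (s ^ 2 * (1 - s ^ 2) ^ n).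
Proof.
  intros HV Hs. pose proof (lf_u0_small _ _ _ _ LF). pose proof (lf_q0_pos _ _ _ _ LF).
  pose proof (usub_range E0 V s u0 HE0 HV Hs) as Hu.
  pose proof (lf_q_between (usub E0 V s) ltac:(rewrite Rabs_pos_eq; lra)) as Hq.
  assert (HV0 : 0 < V) by nra.
  assert (Hs2 : 0 <= s ^ 2 <= 1) by (split; [|rewrite <- (pow1 2); apply pow_incr]; nra).
  unfold g_plus, phi_ps, coef_plus, w_plus. rewrite usub_pow by exact HE0.
  assert (Hc : 0 <= ((E0 - V) / E0) ^ n * (1 - s ^ 2) ^ n).
  { apply Rmult_le_pos; apply pow_le; [apply Rmult_le_pos; [lra|apply Rlt_le, Rinv_0_lt_compat; lra]|nra]. }
  assert (Hw : 0 <= 2 * (E0 - V) * sqrt (E0 - V) * s ^ 2 * sqrt (2 * V + (E0 - V) * s ^ 2) / V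
            <= 2 * (E0 - V) * sqrt (E0 - V) * sqrt (V + E0) / V * s ^ 2).
  { assert (Hk : 0 <= 2 * (E0 - V) * sqrt (E0 - V) * s ^ 2 / V).
    { apply Rmult_le_pos; [|apply Rlt_le, Rinv_0_lt_compat; lra].
      apply Rmult_le_pos; [apply Rmult_le_pos; [lra|apply sqrt_pos]|nra]. }
    assert (sqrt (2 * V + (E0 - V) * s ^ 2) <= sqrt (V + E0)) by (apply sqrt_le_1_alt; nra).
    pose proof (sqrt_pos (2 * V + (E0 - V) * s ^ 2)).
    replace (2 * (E0 - V) * sqrt (E0 - V) * s ^ 2 * sqrt (2 * V + (E0 - V) * s ^ 2) / V)
      with (2 * (E0 - V) * sqrt (E0 - V) * s ^ 2 / V * sqrt (2 * V + (E0 - V) * s ^ 2)) by (field; lra).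
    replace (2 * (E0 - V) * sqrt (E0 - V) * sqrt (V + E0) / V * s ^ 2)
      with (2 * (E0 - V) * sqrt (E0 - V) * s ^ 2 / V * sqrt (V + E0)) by (field; lra).
    split; [apply Rmult_le_pos|apply Rmult_le_compat_l]; assumption. }
  set (c := ((E0 - V) / E0) ^ n * (1 - s ^ 2) ^ n) in *.
  assert (Hq0 : 0 <= PSeries b (usub E0 V s)) by (unfold tol in Hq; lra).
  split.
  - apply Rmult_le_pos; [apply Rmult_le_pos|]; lra.
  - replace (((E0 - V) / E0) ^ n * ((1 + tol) * PSeries b 0) *
             (2 * (E0 - V) * sqrt (E0 - V) * sqrt (V + E0) / V) * (s ^ 2 * (1 - s ^ 2) ^ n))
      with (c * ((1 + tol) * PSeries b 0) * (2 * (E0 - V) * sqrt (E0 - V) * sqrt (V + E0) / V * s ^ 2))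
      by (unfold c; ring).
    apply Rmult_le_compat; [apply Rmult_le_pos; lra|lra|apply Rmult_le_compat_l; lra|lra].
Qed.

Lemma g_minus_lower (V s : R) : E0 * (1 - u0) < V < E0 -> 0 <= s <= 1 ->
  coef_minus b n E0 V * (1 - s ^ 2) ^ n <= g_minus b n E0 V s.
Proof.
  intros HV Hs. pose proof (lf_u0_small _ _ _ _ LF). pose proof (lf_q0_pos _ _ _ _ LF).
  pose proof (usub_range E0 V s u0 HE0 HV Hs) as Hu.
  pose proof (lf_q_between (usub E0 V s) ltac:(rewrite Rabs_pos_eq; lra)) as Hq.
  assert (HV0 : 0 < V) by nra.
  assert (Hs2 : 0 <= s ^ 2 <= 1) by (split; [|rewrite <- (pow1 2); apply pow_incr]; nra).
  unfold g_minus, phi_ps, coef_minus, w_minus. rewrite usub_pow by exact HE0.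
  assert (Hc : 0 <= ((E0 - V) / E0) ^ n * (1 - s ^ 2) ^ n).
  { apply Rmult_le_pos; apply pow_le; [apply Rmult_le_pos; [lra|apply Rlt_le, Rinv_0_lt_compat; lra]|nra]. }
  assert (Hw : 0 <= 2 * V * sqrt (E0 - V) / sqrt (V + E0)
            <= 2 * V * sqrt (E0 - V) / sqrt (2 * V + (E0 - V) * s ^ 2)).
  { pose proof (sqrt_lt_R0 (E0 - V) ltac:(lra)).
    pose proof (sqrt_lt_R0 (2 * V + (E0 - V) * s ^ 2) ltac:(nra)).
    split; [apply Rlt_le, Rdiv_lt_0_compat; [nra|apply sqrt_lt_R0; lra]|].
    unfold Rdiv. apply Rmult_le_compat_l; [nra|]. apply Rinv_le_contravar; [lra|].
    apply sqrt_le_1_alt. nra. }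
  set (c := ((E0 - V) / E0) ^ n * (1 - s ^ 2) ^ n) in *.
  replace (((E0 - V) / E0) ^ n * ((1 - tol) * PSeries b 0) *
           (2 * V * sqrt (E0 - V) / sqrt (V + E0)) * (1 - s ^ 2) ^ n)
    with (c * ((1 - tol) * PSeries b 0) * (2 * V * sqrt (E0 - V) / sqrt (V + E0))) by (unfold c; ring).
  apply Rmult_le_compat; [apply Rmult_le_pos; unfold tol in *; lra|lra|
    apply Rmult_le_compat_l; unfold tol in *; lra|lra].
Qed.

Lemma dg_minus_bracket_bound (u Lm : R) : 0 <= u <= u0 -> Rabs Lm <= 1/2 + 2 * u0 ->
  Rabs (- (INR n * PSeries b u + u * PSeries (PS_derive b) u) + PSeries b u * Lm)
  <= PSeries b 0 * log_deriv_bound n u0.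
Proof.
  intros Hu HLm. pose proof (lf_q0_pos _ _ _ _ LF).
  assert (Hu' : Rabs u <= u0) by (rewrite Rabs_pos_eq; lra).
  pose proof (lf_q_between u Hu') as Hq. pose proof (lf_dq_small _ _ _ _ LF u Hu') as Hdq.
  pose proof (pos_INR n). unfold tol in *.
  assert (Hq0 : 0 <= PSeries b u) by lra.
  eapply Rle_trans; [apply Rabs_triang|]. rewrite Rabs_Ropp, Rabs_mult, (Rabs_pos_eq (PSeries b u)) by lra.
  eapply Rle_trans; [apply Rplus_le_compat_r, Rabs_triang|].
  rewrite Rabs_mult, (Rabs_pos_eq (INR n)), (Rabs_pos_eq (PSeries b u)) by lra.
  assert (INR n * PSeries b u <= INR n * ((1 + /1000) * PSeries b 0)) by (apply Rmult_le_compat_l; lra).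
  assert (PSeries b u * Rabs Lm <= (1 + /1000) * PSeries b 0 * (1/2 + 2 * u0))
    by (apply Rmult_le_compat; [lra|apply Rabs_pos|lra|lra]).
  unfold log_deriv_bound, tol. nra.
Qed.

Lemma g_minus_derive (W s : R) : E0 * (1 - u0) < W < E0 -> 0 <= s <= 1 ->
  is_derive (fun w => g_minus b n E0 w s) W (dg_minus b n E0 W s).
Proof.
  intros HW Hs. pose proof (lf_u0_small _ _ _ _ LF).
  assert (HW0 : 0 < W) by nra.
  pose proof (usub_range E0 W s u0 HE0 HW Hs) as Hu.
  assert (H1 : is_derive (fun w => phi_ps b n (usub E0 w s)) W
                 (- ((1 - s ^ 2) / E0) * dphi_ps b n (usub E0 W s))).
  { apply (is_derive_comp (phi_ps b n) (fun w => usub E0 w s)).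
    - apply (phi_ps_derive phi n b u0 LF). rewrite Rabs_pos_eq; lra.
    - unfold usub. auto_derive; [easy|field; lra]. }
  pose proof (w_minus_derive E0 W s ltac:(lra) Hs) as H2.
  exact (is_derive_mult _ _ W _ _ H1 H2 ltac:(intros; apply Rmult_comm)).
Qed.

Lemma dg_minus_bound (V W s : R) : E0 * (1 - u0) < V < E0 -> V <= W ->
  (1 - tol) * (E0 - V) <= E0 - W -> 0 <= s <= 1 ->
  Rabs (dg_minus b n E0 W s) <= coef_deriv b n u0 E0 V * (1 - s ^ 2) ^ n.
Proof.
  intros HV HVW HL Hs. pose proof (lf_u0_small _ _ _ _ LF). pose proof (lf_q0_pos _ _ _ _ LF).
  assert (HV0 : 0 < V) by nra.
  assert (HW : E0 * (1 - u0) < W < E0) by (unfold tol in HL; lra).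
  pose proof (usub_range E0 W s u0 HE0 HW Hs) as Hu.
  rewrite (dg_minus_factor b n E0 W s HE0 ltac:(lra)).
  set (u := usub E0 W s) in *.
  pose proof (w_minus_ratio_bound E0 V W s ltac:(lra) ltac:(lra) HL Hs) as Hw.
  pose proof (dg_minus_bracket_bound u _ Hu (dlog_w_minus_bound E0 W s u0 HE0 ltac:(lra) HW Hs)) as Hb.
  assert (Hun : 0 <= u ^ n <= ((E0 - V) / E0) ^ n * (1 - s ^ 2) ^ n).
  { split; [apply pow_le; lra|].
    rewrite <- Rpow_mult_distr. apply pow_incr. split; [lra|].
    unfold u, usub. assert (0 <= 1 - s ^ 2) by nra.
    replace ((E0 - V) / E0 * (1 - s ^ 2)) with ((E0 - V) * (1 - s ^ 2) / E0) by (field; lra).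
    unfold Rdiv. apply Rmult_le_compat_r; [apply Rlt_le, Rinv_0_lt_compat; lra|].
    apply Rmult_le_compat_r; lra. }
  rewrite !Rabs_mult, (Rabs_pos_eq (w_minus E0 W s / (E0 - W))), (Rabs_pos_eq (u ^ n)) by lra.
  unfold coef_deriv.
  replace (((E0 - V) / E0) ^ n * PSeries b 0 * (sqrt (2 * E0) / ((1 - tol) * sqrt (E0 - V))) *
           log_deriv_bound n u0 * (1 - s ^ 2) ^ n)
    with (sqrt (2 * E0) / ((1 - tol) * sqrt (E0 - V)) * (((E0 - V) / E0) ^ n * (1 - s ^ 2) ^ n) *
          (PSeries b 0 * log_deriv_bound n u0)) by ring.
  apply Rmult_le_compat; [apply Rmult_le_pos; lra|apply Rabs_pos|
    apply Rmult_le_compat; lra|exact Hb].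
Qed.

End Bounds.

Section Integrals.

Variables (phi : R -> R) (n : nat) (b : nat -> R) (u0 E0 : R).
Hypothesis LF : local_factorization phi n b u0.
Hypothesis HE0 : 0 < E0.

Lemma ex_RInt_g_minus (W : R) : E0 * (1 - u0) < W < E0 -> ex_RInt (g_minus b n E0 W) 0 1.
Proof.
  intros HW. apply ex_RInt_cont; [lra|]. intros s Hs. apply (g_minus_continuous phi n b u0); auto.
Qed.

Lemma RInt_g_plus_bounds (V : R) : E0 * (1 - u0) < V < E0 ->
  0 <= RInt (g_plus b n E0 V) 0 1 <= coef_plus b n E0 V * moment2 n.
Proof.
  intros HV.
  assert (Hex : ex_RInt (g_plus b n E0 V) 0 1).
  { apply ex_RInt_cont; [lra|]. intros s Hs. apply (g_plus_continuous phi n b u0); auto. }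
  assert (Hex2 : ex_RInt (fun s => s ^ 2 * (1 - s ^ 2) ^ n) 0 1)
    by (apply ex_RInt_derivable; [lra|intros; auto_derive; easy]).
  split.
  - apply RInt_ge_0; [lra|exact Hex|]. intros s Hs.
    apply (g_plus_bounds phi n b u0); auto; lra.
  - unfold moment2. rewrite <- RInt_Rmult_l by exact Hex2.
    apply RInt_le; [lra|exact Hex|apply ex_RInt_derivable; [lra|intros; auto_derive; easy]|].
    intros s Hs. apply (g_plus_bounds phi n b u0); auto; lra.
Qed.

Lemma RInt_g_minus_lower (V : R) : E0 * (1 - u0) < V < E0 ->
  coef_minus b n E0 V * moment0 n <= RInt (g_minus b n E0 V) 0 1.
Proof.
  intros HV.
  assert (Hex0 : ex_RInt (fun s => (1 - s ^ 2) ^ n) 0 1)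
    by (apply ex_RInt_derivable; [lra|intros; auto_derive; easy]).
  unfold moment0. rewrite <- RInt_Rmult_l by exact Hex0.
  apply RInt_le; [lra|apply ex_RInt_derivable; [lra|intros; auto_derive; easy]|
    apply ex_RInt_g_minus, HV|].
  intros s Hs. apply (g_minus_lower phi n b u0); auto; lra.
Qed.

Lemma xi_minus_diff_quot_bound (V t : R) : E0 * (1 - u0) < V < E0 -> 0 < t < tol * (E0 - V) ->
  Rabs ((RInt (g_minus b n E0 (V + t)) 0 1 - RInt (g_minus b n E0 V) 0 1) / t)
  <= coef_deriv b n u0 E0 V * moment0 n.
Proof.
  intros HV Ht.
  assert (HVt : E0 * (1 - u0) < V + t < E0) by (unfold tol in Ht; lra).
  pose proof (ex_RInt_g_minus _ HVt) as Ex1. pose proof (ex_RInt_g_minus _ HV) as Ex0.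
  assert (Hex0 : ex_RInt (fun s => (1 - s ^ 2) ^ n) 0 1)
    by (apply ex_RInt_derivable; [lra|intros; auto_derive; easy]).
  assert (Ext : ex_RInt (fun s => g_minus b n E0 (V + t) s - g_minus b n E0 V s) 0 1)
    by (apply (ex_RInt_minus (V := R_NormedModule)); assumption).
  replace ((RInt (g_minus b n E0 (V + t)) 0 1 - RInt (g_minus b n E0 V) 0 1) / t)
    with (RInt (fun s => / t * (g_minus b n E0 (V + t) s - g_minus b n E0 V s)) 0 1).
  2:{ rewrite RInt_Rmult_l by exact Ext.
      rewrite (RInt_minus (V := R_CompleteNormedModule)) by assumption.
      unfold minus, plus, opp; simpl. field. lra. }
  unfold moment0. rewrite <- RInt_Rmult_l by exact Hex0.
  apply Rabs_RInt_le; [lra|apply (ex_RInt_scal (V := R_NormedModule)), Ext|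
    apply ex_RInt_derivable; [lra|intros; auto_derive; easy]|].
  intros s Hs.
  destruct (MVT_abs (fun w => g_minus b n E0 w s) (fun w => dg_minus b n E0 w s) V (V + t))
    as [w [Hw1 Hw2]].
  { intros w Hw. rewrite Rmin_left, Rmax_right in Hw by lra.
    apply is_derive_Reals, (g_minus_derive phi n b u0); auto; lra. }
  rewrite Rmin_left, Rmax_right in Hw2 by lra.
  rewrite Rabs_mult, Rabs_inv, Hw1.
  replace (V + t - V) with t by ring. rewrite (Rabs_pos_eq t) by lra.
  replace (/ t * (Rabs (dg_minus b n E0 w s) * t)) with (Rabs (dg_minus b n E0 w s)) by (field; lra).
  apply (dg_minus_bound phi n b u0); auto; unfold tol in *; lra.
Qed.

Lemma deriv_xi_minus_bound (V : R) : E0 * (1 - u0) < V < E0 ->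
  Rabs (deriv (fun W => impint (fun E => Phi phi E0 E * Rpower (E ^ 2 / W ^ 2 - 1) (-1/2)) W E0) V)
  <= coef_deriv b n u0 E0 V * moment0 n.
Proof.
  intros HV. apply Rabs_deriv_le with (h := tol * (E0 - V)); [unfold tol; lra|].
  intros t Ht. assert (HVt : E0 * (1 - u0) < V + t < E0) by (unfold tol in Ht; lra).
  rewrite (impint_xi_minus phi n b u0 E0 LF HE0 (V + t) HVt), (impint_xi_minus phi n b u0 E0 LF HE0 V HV).
  apply xi_minus_diff_quot_bound; assumption.
Qed.

End Integrals.

(* [coef_product_lt] after cancelling the common factors; for [n = 3] the sides differ by 2%. *)
Lemma log_deriv_bound_small (n : nat) (u0 V E0 : R) : (n <= 3)%nat -> 0 < u0 <= / 1000 -> 0 < E0 ->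
  E0 * (1 - u0) < V < E0 ->
  (1 + tol) * 2 * log_deriv_bound n u0 * (sqrt (V + E0) ^ 3 * sqrt (2 * E0))
  < 16/5 * (1 - tol) ^ 3 * V ^ 2 * (2 * INR n + 3).
Proof.
  intros Hn Hu0 HE HV.
  assert (Hx : 0 <= INR n <= 3) by (split; [apply pos_INR|apply (le_INR n 3) in Hn; simpl in Hn; lra]).
  set (x := INR n) in *.
  assert (HB : 0 < log_deriv_bound n u0 <= 1.001 * x + 0.5036) by (unfold log_deriv_bound, tol; fold x; lra).
  pose proof (sqrt_lt_R0 (V + E0) ltac:(nra)) as HT. pose proof (sqrt_lt_R0 (2 * E0) ltac:(lra)) as HE2.
  pose proof (sqrt_sqrt (V + E0) ltac:(nra)) as HT2. pose proof (sqrt_sqrt (2 * E0) ltac:(lra)) as HE22.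
  set (T := sqrt (V + E0)) in *. set (E2 := sqrt (2 * E0)) in *.
  assert (HTE : T <= E2) by (apply sq_le; lra).
  assert (HT4 : T ^ 3 * E2 <= 4 * E0 ^ 2).
  { assert (T ^ 3 * E2 <= E2 ^ 3 * E2).
    { apply Rmult_le_compat_r; [lra|]. apply pow_incr. lra. }
    replace (4 * E0 ^ 2) with (E2 ^ 3 * E2) by (replace (E2 ^ 3 * E2) with ((E2 * E2) * (E2 * E2)) by ring;
      rewrite HE22; ring). lra. }
  assert (HV2 : 0.998001 * E0 ^ 2 <= V ^ 2).
  { assert (0.999 * E0 <= V) by nra. simpl. nra. }
  unfold tol.
  apply Rle_lt_trans with ((1 + / 1000) * 2 * (1.001 * x + 0.5036) * (4 * E0 ^ 2)).
  { apply Rmult_le_compat; [lra|apply Rmult_le_pos; [apply pow_le|]; lra|lra|exact HT4]. }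
  apply Rlt_le_trans with (16/5 * (1 - / 1000) ^ 3 * (0.998001 * E0 ^ 2) * (2 * x + 3)).
  - assert (0 < E0 ^ 2) by (apply pow_lt; lra). simpl. nra.
  - apply Rmult_le_compat_r; [lra|]. apply Rmult_le_compat_l; [simpl; lra|exact HV2].
Qed.

Lemma coef_minus_pos (b : nat -> R) (n : nat) (E0 V : R) : 0 < V < E0 -> 0 < PSeries b 0 ->
  0 < coef_minus b n E0 V.
Proof.
  intros HV HA. unfold coef_minus, tol.
  pose proof (sqrt_lt_R0 (E0 - V) ltac:(lra)). pose proof (sqrt_lt_R0 (V + E0) ltac:(lra)).
  apply Rmult_lt_0_compat; [apply Rmult_lt_0_compat|].
  - apply pow_lt, Rdiv_lt_0_compat; lra.
  - lra.
  - apply Rdiv_lt_0_compat; nra.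
Qed.

Lemma coef_product_lt (b : nat -> R) (n : nat) (u0 E0 V : R) : (n <= 3)%nat ->
  0 < u0 <= / 1000 -> 0 < E0 -> E0 * (1 - u0) < V < E0 -> 0 < PSeries b 0 ->
  V * (coef_plus b n E0 V * moment2 n) * (coef_deriv b n u0 E0 V * moment0 n)
  < 4/5 * (coef_minus b n E0 V * moment0 n) ^ 2.
Proof.
  intros Hn Hu0 HE HV HA.
  pose proof (log_deriv_bound_small n u0 V E0 Hn Hu0 HE HV) as Hnum.
  assert (HV0 : 0 < V) by nra.
  pose proof (moment0_pos n) as HJ. rewrite moment0_eq in *.
  assert (Hc : 0 < 2 * INR n + 3) by (pose proof (pos_INR n); lra).
  assert (HK : 0 < moment2 n) by (apply (Rmult_lt_reg_l (2 * INR n + 3)); lra).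
  assert (Hc0 : 0 < ((E0 - V) / E0) ^ n) by (apply pow_lt, Rdiv_lt_0_compat; lra).
  pose proof (sqrt_lt_R0 (E0 - V) ltac:(lra)) as HS. pose proof (sqrt_lt_R0 (V + E0) ltac:(lra)) as HT.
  pose proof (sqrt_lt_R0 (2 * E0) ltac:(lra)) as HE2.
  pose proof (sqrt_sqrt (E0 - V) ltac:(lra)) as HS2. pose proof (sqrt_sqrt (V + E0) ltac:(lra)) as HT2.
  unfold coef_plus, coef_deriv, coef_minus.
  set (S := sqrt (E0 - V)) in *. set (T := sqrt (V + E0)) in *. set (E2 := sqrt (2 * E0)) in *.
  set (c0 := ((E0 - V) / E0) ^ n) in *. set (A := PSeries b 0) in *. set (K := moment2 n) in *.
  set (P := (c0 * A * K) ^ 2 * ((2 * INR n + 3) * (E0 - V)) / ((1 - tol) * T ^ 2)).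
  assert (HP : 0 < P).
  { assert (0 < c0 * A * K) by (apply Rmult_lt_0_compat; [apply Rmult_lt_0_compat|]; assumption).
    unfold P, tol. apply Rdiv_lt_0_compat.
    - apply Rmult_lt_0_compat; [apply pow_lt; assumption|apply Rmult_lt_0_compat; lra].
    - apply Rmult_lt_0_compat; [lra|apply pow_lt, HT]. }
  replace (V * (c0 * ((1 + tol) * A) * (2 * (E0 - V) * S * T / V) * K) *
           (c0 * A * (E2 / ((1 - tol) * S)) * log_deriv_bound n u0 * ((2 * INR n + 3) * K)))
    with (P * ((1 + tol) * 2 * log_deriv_bound n u0 * (T ^ 3 * E2)))
    by (unfold P, tol; field; repeat split; lra).
  replace (4 / 5 * (c0 * ((1 - tol) * A) * (2 * V * S / T) * ((2 * INR n + 3) * K)) ^ 2)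
    with (P * (16/5 * (1 - tol) ^ 3 * V ^ 2 * (2 * INR n + 3)))
    by (unfold P, tol; rewrite <- HS2; field; repeat split; lra).
  apply Rmult_lt_compat_l; assumption.
Qed.

Lemma ratio_lt_of_bounds (V Ip Im d P Q D : R) :
  0 < V -> 0 <= Ip <= P -> 0 < Q <= Im -> Rabs d <= D -> V * P * D < 4/5 * Q ^ 2 ->
  Rabs (4 * PI / V * Ip / (4 * PI / V * Im) * (- 4 * PI * d / (4 * PI / V * Im))) < 4/5.
Proof.
  intros HV HIp HQ Hd Hkey. pose proof PI_RGT_0.
  replace (4 * PI / V * Ip / (4 * PI / V * Im) * (- 4 * PI * d / (4 * PI / V * Im)))
    with (- (V * Ip * d) / Im ^ 2) by (field; repeat split; lra).
  unfold Rdiv. rewrite Rabs_mult, Rabs_Ropp, Rabs_inv, !Rabs_mult.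
  rewrite (Rabs_pos_eq V), (Rabs_pos_eq Ip), (Rabs_pos_eq (Im ^ 2)) by (try apply pow_le; lra).
  apply (Rmult_lt_reg_r (Im ^ 2)); [apply pow_lt; lra|].
  rewrite Rmult_assoc, Rinv_l, Rmult_1_r by (apply pow_nonzero; lra).
  assert (V * Ip * Rabs d <= V * P * D).
  { apply Rmult_le_compat; [nra|apply Rabs_pos|apply Rmult_le_compat_l; lra|exact Hd]. }
  assert (Q ^ 2 <= Im ^ 2) by (apply pow_incr; lra).
  lra.
Qed.

Theorem mainTheorem8 (E0 : R) (phi : R -> R) (n : nat) :
  0 < E0 -> standing_assumptions phi n -> (n <= 3)%nat ->
  exists delta, 0 < delta /\
    forall V, E0 - delta < V < E0 ->
      Rabs (xi phi E0 (1/2) V / xi phi E0 (-1/2) V *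
            (zeta phi E0 V / xi phi E0 (-1/2) V)) < 4 / 5.
Proof.
  intros HE Hs Hn.
  destruct (local_factorization_exists phi n Hs) as [b [u0 LF]].
  pose proof (lf_u0_pos _ _ _ _ LF). pose proof (lf_u0_small _ _ _ _ LF).
  pose proof (lf_q0_pos _ _ _ _ LF).
  exists (E0 * u0). split; [nra|]. intros V HV.
  assert (HV' : E0 * (1 - u0) < V < E0) by lra.
  unfold xi, zeta.
  rewrite (impint_xi_plus phi n b u0 E0 LF HE V HV'), (impint_xi_minus phi n b u0 E0 LF HE V HV').
  apply ratio_lt_of_bounds with (P := coef_plus b n E0 V * moment2 n)
    (Q := coef_minus b n E0 V * moment0 n) (D := coef_deriv b n u0 E0 V * moment0 n).
  - nra.
  - apply (RInt_g_plus_bounds phi n b u0 E0 LF HE V HV').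
  - split; [apply Rmult_lt_0_compat; [apply coef_minus_pos; nra|apply moment0_pos]|].
    apply (RInt_g_minus_lower phi n b u0 E0 LF HE V HV').
  - apply (deriv_xi_minus_bound phi n b u0 E0 LF HE V HV').
  - apply coef_product_lt; auto.
Qed.
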